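(* Let $t\ge1$, let $\mathcal{F},\mathcal{G}\subseteq 2^{[k]}$ be cross $t$-intersecting families and let $1\le i<j\le k$. Suppose that $a$ is the maximal necessary intersection point of $\mathcal{F}$ and $\mathcal{G}$. Then $|[a-1]\cap F\cap G|\ge t-1$ for all $F\in\mathcal{F}$ and $G\in\mathcal{G}$. Moreover, $s_{i,j}(\mathcal{F})$ and $s_{i,j}(\mathcal{G})$ are cross $t$-intersecting and their maximal necessary intersection point is at most $a$.
   Context: Families $\mathcal{F},\mathcal{G}$ are cross $t$-intersecting if $|F\cap G|\ge t$ for all $F\in\mathcal{F},G\in\mathcal{G}$. For cross $t$-intersecting $\mathcal{F},\mathcal{G}\subseteq2^{[k]}$, an element $a\in[k]$ is a necessary intersection point of $\mathcal{F}$ and $\mathcal{G}$ if there exist $F\in\mathcal{F}$, $G\in\mathcal{G}$ with $|[a]\cap F\cap G|=t$ and $a\in F\cap G$; the maximal necessary intersection point is the largest such $a$. For $i<j$, the shifting operator is $s_{i,j}(\mathcal{F})=\{s_{i,j}(F):F\in\mathcal{F}\}$ where $s_{i,j}(F)=(F\setminus\{j\})\cup\{i\}$ if $j\in F$, $i\notin F$ and $(F\setminus\{j\})\cup\{i\}\notin\mathcal{F}$, and $s_{i,j}(F)=F$ otherwise. $[0]=\emptyset$. *)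

(* Ground set [k] = {1,..,k} is encoded as 'I_k, the ordinal
   x : 'I_k standing for the element x+1 of [k]. The order on elements is the
   order of ordinals, so for a : 'I_k the prefix [a] = {1,..,a} is
   [set x | x <= a] and [a-1] = [set x | x < a]. *)
From mathcomp Require Import all_boot all_order.
Set Implicit Arguments. Unset Strict Implicit. Unset Printing Implicit Defensive.

Section Defs.
Variable k : nat.

Definition prefix (a : 'I_k) : {set 'I_k} := [set x : 'I_k | x <= a].
Definition prefix_lt (a : 'I_k) : {set 'I_k} := [set x : 'I_k | x < a].

Definition cross_t_intersecting (t : nat) (FF GG : {set {set 'I_k}}) : Prop :=
  forall F G, F \in FF -> G \in GG -> t <= #|F :&: G|.

Definition necessary_intersection_point (t : nat) (FF GG : {set {set 'I_k}})
  (a : 'I_k) : Prop :=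
  exists F G, [/\ F \in FF, G \in GG, #|prefix a :&: F :&: G| = t
                & a \in F :&: G].

Definition max_necessary_intersection_point (t : nat) (FF GG : {set {set 'I_k}})
  (a : 'I_k) : Prop :=
  necessary_intersection_point t FF GG a /\
  forall b, necessary_intersection_point t FF GG b -> b <= a.

Definition shift_set (i j : 'I_k) (FF : {set {set 'I_k}}) (F : {set 'I_k})
  : {set 'I_k} :=
  if [&& j \in F, i \notin F & (i |: (F :\ j)) \notin FF]
  then i |: (F :\ j) else F.

Definition shift_family (i j : 'I_k) (FF : {set {set 'I_k}}) : {set {set 'I_k}} :=
  [set shift_set i j FF F | F in FF].

End Defs.

(* Every pair F, G contains a necessary intersection point, namely the t-th element c
   of F :&: G, so c <= a; this gives the bound on [a-1] and shows that FF and GG are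
   already cross t-intersecting inside [a].  A shift s_{i,j} preserves cross
   t-intersection inside any window A with (j \in A -> i \in A), such as [k] and [a],
   because each shifted intersection arises from an original one (or, when a set is
   blocked, from the intersection with its shift) by trading at most j for i.
   Cross t-intersection inside [a] rules out necessary points beyond a. *)

From Pilot Require Import Defs.
From mathcomp Require Import all_boot all_order.

Set Implicit Arguments.
Unset Strict Implicit.
Unset Printing Implicit Defensive.

Section Prefix.
Variable k : nat.
Implicit Types (S : {set 'I_k}) (a c : 'I_k).

Lemma prefixE a : Defs.prefix a = a |: prefix_lt a.
Proof. by apply/setP => x; rewrite !inE leq_eqVlt -val_eqE. Qed.

Lemma card_prefix_lt c S :
  c \in S -> #|prefix_lt c :&: S| = #|Defs.prefix c :&: S|.-1.
Proof.
move=> cS; rewrite prefixE setIUl (setIidPl (_ : [set c] \subset S)) ?sub1set //.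
by rewrite cardsU1 !inE ltnn.
Qed.

Lemma prefix_subset a c : a <= c -> Defs.prefix a \subset Defs.prefix c.
Proof. by move=> ac; apply/subsetP => x; rewrite !inE => /leq_trans; apply. Qed.

Lemma prefix_subset_lt a c : a < c -> Defs.prefix a \subset prefix_lt c.
Proof. by move=> ac; apply/subsetP => x; rewrite !inE => /leq_ltn_trans; apply. Qed.

Lemma prefix_lt_subset a c : a <= c -> prefix_lt a \subset prefix_lt c.
Proof. by move=> ac; apply/subsetP => x; rewrite !inE => /leq_trans; apply. Qed.

Lemma exists_prefix_card S n :
  0 < n <= #|S| -> exists2 c, c \in S & #|Defs.prefix c :&: S| = n.
Proof.
elim: n => [|[|n] IH] //.
  case/card_gt0P => x xS; have [c cS minc] := arg_minnP val xS.
  exists c => //; rewrite (_ : _ :&: _ = [set c]) ?cards1 //.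
  apply/setP => y; rewrite !inE; apply/andP/eqP => [[yc yS]|->]; last by [].
  by apply/val_inj/eqP; rewrite eqn_leq yc minc.
move=> /= n_lt; have [c cS cardc] := IH (ltnW n_lt).
have : 0 < #|S :\: Defs.prefix c| by rewrite cardsD setIC cardc subn_gt0.
case/card_gt0P => x xS'; have [d /setDP [dS dc] mind] := arg_minnP val xS'.
exists d => //; rewrite (_ : _ :&: _ = d |: (Defs.prefix c :&: S)).
  by rewrite cardsU1 inE (negbTE dc) cardc.
apply/setP => y; rewrite !inE; case: (y =P d) => [->|/eqP yd] /=; first by rewrite leqnn.
move: dc; rewrite inE -ltnNge => cd.
case yS: (y \in S); rewrite ?andbF ?andbT //.
apply/idP/idP => [yd'|yc]; last by rewrite (leq_trans yc (ltnW cd)).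
rewrite leqNgt; apply/negP => cy.
have yS' : y \in S :\: Defs.prefix c by rewrite !inE yS -ltnNge cy.
by move/negP: yd; apply; rewrite -val_eqE eqn_leq yd' (mind y yS').
Qed.

End Prefix.

Section Shift.
Variables (k : nat) (i j : 'I_k).
Implicit Types (A X Y F G : {set 'I_k}) (FF GG : {set {set 'I_k}}).

Definition cross_t_intersecting_in A t FF GG :=
  forall F G, F \in FF -> G \in GG -> t <= #|A :&: F :&: G|.

Lemma cross_t_intersectingE t FF GG :
  cross_t_intersecting t FF GG <-> cross_t_intersecting_in setT t FF GG.
Proof. by split=> cross F G hF hG; move: (cross F G hF hG); rewrite -setIA setTI. Qed.

Lemma cross_t_intersecting_in_sym A t FF GG :
  cross_t_intersecting_in A t FF GG -> cross_t_intersecting_in A t GG FF.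
Proof. by move=> cross G F hG hF; rewrite setIAC; apply: cross. Qed.

Lemma exchange_leq_card X Y :
  X :\ j \subset Y -> (j \in X -> i \in Y :\: X) -> #|X| <= #|Y|.
Proof.
move=> sXY hj; have [jX|njX] := boolP (j \in X); last first.
  apply/subset_leq_card/(subset_trans _ sXY)/subsetP => x xX.
  by rewrite !inE xX andbT; apply: contraNneq njX => <-.
have /setDP [iY iX] := hj jX.
rewrite (cardsD1 j X) (cardsD1 i Y) jX iY !add1n ltnS.
apply/subset_leq_card/subsetP => x /setD1P [xj xX].
by rewrite !inE (subsetP sXY) ?inE ?xj // andbT; apply: contraNneq iX => <-.
Qed.

Definition shift_moves FF F := [&& j \in F, i \notin F & i |: (F :\ j) \notin FF].

Lemma shift_setE FF F :
  shift_set i j FF F = if shift_moves FF F then i |: (F :\ j) else F.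
Proof. by []. Qed.

Variables (A : {set 'I_k}) (t : nat).
Hypothesis neq_ij : i != j.
Hypothesis shift_closed : j \in A -> i \in A.

Lemma card_shift_both_moved F G :
  j \in F -> i \notin F -> j \in G -> i \notin G ->
  #|A :&: F :&: G| <= #|A :&: (i |: (F :\ j)) :&: (i |: (G :\ j))|.
Proof.
move=> jF iF jG iG; apply: exchange_leq_card.
  by apply/subsetP => x; rewrite !inE => /andP [-> /andP [/andP [-> ->] ->]]; rewrite !orbT.
by rewrite !inE (negbTE iF) eqxx !andbF !andbT => /andP [/andP [/shift_closed]].
Qed.

Lemma cross_shift_one_moved FF GG F G :
  cross_t_intersecting_in A t FF GG -> F \in FF -> G \in GG ->
  shift_moves FF F -> ~~ shift_moves GG G ->
  t <= #|A :&: (i |: (F :\ j)) :&: G|.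
Proof.
move=> cross hF hG /and3P [jF iF _] fixG.
have [/andP [jG iG] | ] := boolP ((j \in G) && (i \notin G)).
  (* G is blocked by its own shift G', which is in GG; compare with (F, G') instead. *)
  move: fixG; rewrite /shift_moves jG iG negbK => hG'.
  apply: leq_trans (cross F _ hF hG') _; apply: exchange_leq_card.
    apply/subsetP => x; rewrite !inE.
    case/andP => xj /andP [/andP [xA xF] /orP [/eqP xi | /andP [_ xG]]].
      by move: iF; rewrite -xi xF.
    by rewrite xj xA xF xG !orbT.
  by rewrite !inE eqxx [j == i]eq_sym (negbTE neq_ij) andbF.
rewrite negb_and negbK => jGiG.
apply: leq_trans (cross F G hF hG) _; apply: exchange_leq_card.
  by apply/subsetP => x; rewrite !inE => /andP [-> /andP [/andP [-> ->] ->]]; rewrite !orbT.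
rewrite !inE (negbTE iF) eqxx !andbF !andbT => /andP [/andP [/shift_closed -> _] jG].
by move: jGiG; rewrite jG.
Qed.

Lemma cross_t_intersecting_in_shift FF GG :
  cross_t_intersecting_in A t FF GG ->
  cross_t_intersecting_in A t (shift_family i j FF) (shift_family i j GG).
Proof.
move=> cross _ _ /imsetP [F hF ->] /imsetP [G hG ->]; rewrite !shift_setE.
case mF: (shift_moves FF F); case mG: (shift_moves GG G) => /=.
- case/and3P: mF => jF iF _; case/and3P: mG => jG iG _.
  by apply: leq_trans (cross F G hF hG) _; apply: card_shift_both_moved.
- by apply: (cross_shift_one_moved cross); rewrite ?mF ?mG.
- rewrite setIAC.
  by apply: (cross_shift_one_moved (cross_t_intersecting_in_sym cross)); rewrite ?mF ?mG.
- exact: cross.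
Qed.

End Shift.

Section NecessaryPoints.
Variables (k t : nat).
Implicit Types (a b c : 'I_k) (F G : {set 'I_k}) (FF GG : {set {set 'I_k}}).

Definition necessary_intersection_pointb FF GG b :=
  [exists F in FF, exists G in GG,
     (#|Defs.prefix b :&: F :&: G| == t) && (b \in F :&: G)].

Lemma necessary_intersection_pointP FF GG b :
  reflect (necessary_intersection_point t FF GG b)
    (necessary_intersection_pointb FF GG b).
Proof.
apply: (iffP exists_inP) => [[F hF /exists_inP [G hG /andP [/eqP cardb bFG]]]|].
  by exists F, G.
case=> F [G [hF hG cardb bFG]]; exists F => //.
by apply/exists_inP; exists G; rewrite ?cardb ?eqxx.
Qed.

Lemma exists_max_necessary_intersection_point FF GG c :
  necessary_intersection_point t FF GG c ->
  exists b, max_necessary_intersection_point t FF GG b.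
Proof.
move/necessary_intersection_pointP => nec_c.
have [b /necessary_intersection_pointP nec_b max_b] :=
  arg_maxnP val (P := necessary_intersection_pointb FF GG) nec_c.
by exists b; split=> // b' /necessary_intersection_pointP /max_b.
Qed.

Lemma necessary_point_of_pair FF GG F G :
  0 < t -> F \in FF -> G \in GG -> t <= #|F :&: G| ->
  exists c, [/\ c \in F :&: G, #|Defs.prefix c :&: (F :&: G)| = t
              & necessary_intersection_point t FF GG c].
Proof.
move=> t_gt0 hF hG t_le.
have [|c cFG cardc] := exists_prefix_card (S := F :&: G) (n := t); first by rewrite t_gt0.
by exists c; split=> //; exists F, G; rewrite -setIA.
Qed.

Lemma necessary_point_le FF GG a b :
  0 < t -> cross_t_intersecting_in (Defs.prefix a) t FF GG ->
  necessary_intersection_point t FF GG b -> b <= a.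
Proof.
move=> t_gt0 cross [F [G [hF hG cardb bFG]]]; rewrite leqNgt; apply/negP => lt_ab.
have : #|Defs.prefix a :&: (F :&: G)| <= #|prefix_lt b :&: (F :&: G)|.
  exact/subset_leq_card/setSI/prefix_subset_lt.
rewrite card_prefix_lt // !setIA cardb => /(leq_trans (cross F G hF hG)).
by rewrite leqNgt ltn_predL t_gt0.
Qed.

End NecessaryPoints.

Theorem lemma3p4 (k t : nat) (FF GG : {set {set 'I_k}}) (i j a : 'I_k) :
  1 <= t ->
  cross_t_intersecting t FF GG ->
  i < j ->
  max_necessary_intersection_point t FF GG a ->
  (forall F G, F \in FF -> G \in GG -> t.-1 <= #|prefix_lt a :&: F :&: G|) /\
  cross_t_intersecting t (shift_family i j FF) (shift_family i j GG) /\
  (exists b, max_necessary_intersection_point t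
               (shift_family i j FF) (shift_family i j GG) b /\ b <= a).
Proof.
move=> t_gt0 cross lt_ij [nec_a max_a].
have point F G : F \in FF -> G \in GG ->
    exists c, [/\ c \in F :&: G, #|Defs.prefix c :&: (F :&: G)| = t & c <= a].
  move=> hF hG.
  have [c [cFG cardc /max_a]] := necessary_point_of_pair t_gt0 hF hG (cross F G hF hG).
  by exists c.
have cross_a : cross_t_intersecting_in (Defs.prefix a) t FF GG.
  move=> F G hF hG; have [c [_ <- ca]] := point F G hF hG.
  by rewrite -setIA; apply/subset_leq_card/setSI/prefix_subset.
have neq_ij : i != j by rewrite neq_ltn lt_ij.
have cross_s : cross_t_intersecting t (shift_family i j FF) (shift_family i j GG).
  apply/cross_t_intersectingE/cross_t_intersecting_in_shift/cross_t_intersectingE => //.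
  by rewrite !in_setT.
split; [|split=> //].
  move=> F G hF hG; have [c [cFG cardc ca]] := point F G hF hG.
  rewrite -setIA -cardc -card_prefix_lt //.
  exact/subset_leq_card/setSI/prefix_lt_subset.
have [F0 [G0 [hF0 hG0 _ _]]] := nec_a.
have sF0 : shift_set i j FF F0 \in shift_family i j FF by apply: imset_f.
have sG0 : shift_set i j GG G0 \in shift_family i j GG by apply: imset_f.
have [c [_ _ nec_c]] := necessary_point_of_pair t_gt0 sF0 sG0 (cross_s _ _ sF0 sG0).
have [b max_b] := exists_max_necessary_intersection_point nec_c.
exists b; split=> //; apply: necessary_point_le t_gt0 _ max_b.1.
apply: cross_t_intersecting_in_shift cross_a => //.
by rewrite !inE; apply: leq_trans (ltnW lt_ij).
Qed.
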